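(* Let $\mathcal F$ be a filtration array and $E=(E_{m,n})_{m,n\in\mathbb N}$ a nonnegative process adapted to $\mathcal F$. If $E$ is an asymptotic supermartingale (in $L_1$, for $\mathcal F$, uniformly in $\mathcal P$), then $E$ has the asymptotic supermartingale property (in $L_1$, for $\mathcal F$, uniformly in $\mathcal P$).
   Context: $(\Omega,\mathcal A)$ is a measurable space and $\mathcal P$ a set of probability measures on it; $\mathbb N=\{0,1,\dots\}$. A filtration array is a family $(\mathcal F_{m,n})_{m,n\in\mathbb N}$ of sub-$\sigma$-algebras of $\mathcal A$ with $\mathcal F_{m,n}\subset\mathcal F_{m+1,n}\cap\mathcal F_{m,n+1}$; $\mathcal F_{\infty,n}:=\sigma(\bigcup_m\mathcal F_{m,n})$. Adapted means $E_{m,n}$ is $\mathcal F_{m,n}$-measurable. A supermartingale for $\mathcal P$ w.r.t. a filtration $\mathcal G$ is a $\mathcal G$-adapted process $(S_n)$ with each $S_n$ $P$-integrable and $\mathbb E_P[S_{n+1}\mid\mathcal G_n]\le S_n$ $P$-a.s. for all $P\in\mathcal P$, $n\in\mathbb N$. $E$ converges to $S$ in $L_1$ uniformly in $\mathcal P$ if all $E_{m,n},S_n$ are $P$-integrable for all $P\in\mathcal P$ and $\lim_m\sup_{P\in\mathcal P}\mathbb E_P[|E_{m,n}-S_n|]=0$ for every $n$. $E$ is an asymptotic supermartingale if there is a nonnegative supermartingale $S$ for $\mathcal P$ w.r.t. $\mathcal F_{\infty,\bullet}$ such that $E$ converges to $S$ in $L_1$ uniformly in $\mathcal P$. For $P\in\mathcal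 P$ and $m,n\in\mathbb N$ let $\delta_{m,n}=\mathbb E_P[E_{m,n+1}\mid\mathcal F_{m,n}]-E_{m,n}$ if $E_{m,n+1}$ is $P$-integrable and $\delta_{m,n}=\infty$ otherwise (dependence on $P$ suppressed). $E$ has the asymptotic supermartingale property (ASP) if for every $n\in\mathbb N$, $\lim_{m\to\infty}\sup_{P\in\mathcal P}\mathbb E_P[\delta_{m,n}^+]=0$, where $x^+=\max\{x,0\}$. *)

From HB Require Import structures.
From mathcomp Require Import all_boot all_order all_algebra.
From mathcomp Require Import all_classical all_reals all_analysis.
Set Implicit Arguments. Unset Strict Implicit. Unset Printing Implicit Defensive.
Import Order.TTheory GRing.Theory Num.Theory numFieldNormedType.Exports.
Local Open Scope classical_set_scope.
Local Open Scope ring_scope.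

Section Defs.
Context {d : measure_display} {T : measurableType d} {R : realType}.

Definition sub_sigma (G : set (set T)) : Prop :=
  sigma_algebra setT G /\ G `<=` measurable.

Definition G_measurable (G : set (set T)) (X : T -> R) : Prop :=
  forall B : set R, measurable B -> G (X @^-1` B).

Definition cond_exp_version (P : probability T R) (G : set (set T))
    (X Y : T -> R) : Prop :=
  G_measurable G Y /\ P.-integrable setT (EFin \o Y) /\
  forall A, G A -> (\int[P]_(x in A) (Y x)%:E = \int[P]_(x in A) (X x)%:E)%E.

Definition filtration_array (F : nat -> nat -> set (set T)) : Prop :=
  (forall m n, sub_sigma (F m n)) /\
  (forall m n, F m n `<=` F m.+1 n /\ F m n `<=` F m n.+1).

Definition F_inf (F : nat -> nat -> set (set T)) (n : nat) : set (set T) :=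
  smallest (sigma_algebra setT) (\bigcup_m F m n).

Definition adapted_array (F : nat -> nat -> set (set T))
    (E : nat -> nat -> T -> R) : Prop :=
  forall m n, G_measurable (F m n) (E m n).

Definition supermartingale (Pset : set (probability T R))
    (G : nat -> set (set T)) (S : nat -> T -> R) : Prop :=
  (forall n, G_measurable (G n) (S n)) /\
  (forall P, Pset P -> forall n, P.-integrable setT (EFin \o S n)) /\
  (forall P, Pset P -> forall n Y, cond_exp_version P (G n) (S n.+1) Y ->
     {ae P, forall x, Y x <= S n x}).

Definition L1_unif_conv (Pset : set (probability T R))
    (E : nat -> nat -> T -> R) (S : nat -> T -> R) : Prop :=
  (forall P, Pset P -> forall m n,
      P.-integrable setT (EFin \o E m n) /\ P.-integrable setT (EFin \o S n)) /\
  forall n, (fun m => ereal_sup ([set 0%E] `|` [set (\int[P]_x (`|E m n x - S n x|)%:E)%E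
                                 | P in Pset])) @ \oo --> 0%E.

Definition asymptotic_supermartingale (Pset : set (probability T R))
    (F : nat -> nat -> set (set T)) (E : nat -> nat -> T -> R) : Prop :=
  exists S : nat -> T -> R,
    (forall n x, 0 <= S n x) /\ supermartingale Pset (F_inf F) S /\
    L1_unif_conv Pset E S.

(* The conditional expectation
   is a.s. unique, so the value does not depend on the chosen version; we
   take the sup over all versions (a singleton value). *)
Definition exp_delta_pos (P : probability T R)
    (F : nat -> nat -> set (set T)) (E : nat -> nat -> T -> R) (m n : nat)
    : \bar R :=
  if `[< P.-integrable setT (EFin \o E m n.+1) >] then
    ereal_sup [set (\int[P]_x (Num.max (Y x - E m n x) 0)%:E)%E
              | Y in cond_exp_version P (F m n) (E m n.+1)]
  else +oo%E.

Definition ASP (Pset : set (probability T R))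
    (F : nat -> nat -> set (set T)) (E : nat -> nat -> T -> R) : Prop :=
  forall n, (fun m => ereal_sup ([set 0%E] `|` [set exp_delta_pos P F E m n | P in Pset]))
              @ \oo --> 0%E.

End Defs.

(* Let S be the limiting supermartingale and Y a version of E_P[E_{m,n+1} | F_{m,n}].
   On the F_{m,n}-set A := {Y > E_{m,n}} the positive part of delta_{m,n} integrates to
   int_A E_{m,n+1} - int_A E_{m,n}.  Inserting S, the supermartingale inequality on the
   F_{oo,n}-set A gives int_A S_{n+1} <= int_A S_n, so
   E_P[delta_{m,n}^+] <= ||E_{m,n+1} - S_{n+1}||_1 + ||E_{m,n} - S_n||_1,
   and both terms tend to 0 uniformly in P.
   Conditional expectations exist by Radon-Nikodym, applied on the measurable space
   (T, G) for a sub-sigma-algebra G. *)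
From HB Require Import structures.
From mathcomp Require Import all_boot all_order all_algebra.
From mathcomp Require Import all_classical all_reals all_analysis.
From mathcomp Require Import measurable_realfun.
Set Implicit Arguments. Unset Strict Implicit. Unset Printing Implicit Defensive.
Import Order.TTheory GRing.Theory Num.Theory numFieldNormedType.Exports.
Local Open Scope classical_set_scope.
Local Open Scope ring_scope.

Section sub_sigma_algebra.
Context d (T : measurableType d) (R : realType) (G : set (set T)).
Hypothesis sG : sub_sigma G.

Local Notation TG := (g_sigma_algebraType G).

Lemma measurable_sub_sigmaE : (measurable : set (set TG)) = G.
Proof. exact: measurable_g_measurableTypeE sG.1. Qed.

Lemma G_measurableP (f : T -> R) :
  G_measurable G f <-> measurable_fun (setT : set TG) f.
Proof.
split=> [Gf _ B mB|mf B mB]; last first.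
  by have := mf measurableT B mB; rewrite setTI measurable_sub_sigmaE.
by rewrite setTI measurable_sub_sigmaE; exact: Gf.
Qed.

Lemma measurable_fun_sub_sigma d' (U : measurableType d') (f : T -> U) :
  measurable_fun (setT : set TG) f -> measurable_fun (setT : set T) f.
Proof.
move=> mf _ B mB; apply: sG.2.
by have := mf measurableT B mB; rewrite measurable_sub_sigmaE.
Qed.

(* The identity of T, seen as a map into the coarser space (T, G): pushing measures
   and charges along it restricts them to G. *)
Definition coarsen : T -> TG := id.

Lemma measurable_coarsen : measurable_fun setT coarsen.
Proof. by move=> _ B; rewrite measurable_sub_sigmaE setTI => /sG.2. Qed.

HB.instance Definition _ := isMeasurableFun.Build _ _ T TG coarsen
  measurable_coarsen.

Lemma measurable_preimage_coarsen (A : set TG) :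
  measurable A -> measurable (coarsen @^-1` A).
Proof. by move=> mA; have := measurable_coarsen measurableT mA; rewrite setTI. Qed.

Section restricted_charge.
Variables (P : probability T R) (X : T -> R).
Hypothesis intX : P.-integrable setT (EFin \o X).

Definition restricted_charge : set TG -> \bar R :=
  pushforward (induced_charge intX) coarsen.

Let restricted_charge0 : restricted_charge set0 = 0%E.
Proof. by rewrite /restricted_charge /pushforward preimage_set0 charge0. Qed.

Let restricted_charge_finite A : measurable A ->
  restricted_charge A \is a fin_num.
Proof. by move=> mA; apply: fin_num_measure => //; exact: measurable_coarsen. Qed.

Let restricted_charge_sigma_additive : semi_sigma_additive restricted_charge.
Proof.
move=> A mA tA mUA; rewrite /restricted_charge /pushforward preimage_bigcup.
apply: charge_semi_sigma_additive.
- by move=> n; exact: measurable_preimage_coarsen.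
- apply/trivIsetP => /= i j _ _ ij; rewrite -preimage_setI.
  by move/trivIsetP : tA => /(_ _ _ _ _ ij) ->//; rewrite preimage_set0.
- by rewrite -preimage_bigcup; exact: measurable_preimage_coarsen.
Qed.

HB.instance Definition _ := isCharge.Build _ _ _ restricted_charge
  restricted_charge0 restricted_charge_finite restricted_charge_sigma_additive.

End restricted_charge.

Lemma cond_exp_version_exists (P : probability T R) (X : T -> R) :
  P.-integrable setT (EFin \o X) -> exists Y, cond_exp_version P G X Y.
Proof.
move=> intX.
pose mu := distribution P coarsen.
pose nu := restricted_charge intX.
have nu_mu : nu `<< mu.
  apply/null_content_dominatesP => A mA muA.
  apply: null_set_integral => //; first exact: measurable_preimage_coarsen.
  apply: (measurable_funS measurableT) => //; exact: measurable_int intX.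
pose f := Radon_Nikodym nu mu.
have intf : mu.-integrable setT f := Radon_Nikodym_integrable nu_mu.
have mfG := measurable_int _ intf.
have mfT : measurable_fun (setT : set T) f by exact: measurable_fun_sub_sigma mfG.
have intfT : P.-integrable setT f.
  apply/integrableP; split => //.
  move/integrableP : intf => [_]; rewrite ge0_integral_pushforward //.
  exact: measurableT_comp.
have fK x : (fine (f x))%:E = f x by rewrite fineK // Radon_Nikodym_fin_num.
exists (fine \o f); split; [|split].
- by apply/G_measurableP; exact: measurableT_comp.
- by apply: eq_integrable intfT => // x _ /=; rewrite fK.
- move=> A GA; have mA : measurable A := sG.2 _ GA.
  have mAG : (measurable : set (set TG)) A by rewrite measurable_sub_sigmaE.
  transitivity (\int[mu]_(x in A) f x)%E; last by rewrite -Radon_Nikodym_integral.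
  rewrite integral_pushforward //; last exact: integrableS intfT.
  by apply: eq_integral => x _ /=; rewrite fK.
Qed.

End sub_sigma_algebra.

Section integral_bounds.
Context d (T : measurableType d) (R : realType) (mu : {measure set T -> \bar R}).
Local Open Scope ereal_scope.

Lemma integral_le_integral_norm (A : set T) (h : T -> R) : measurable A ->
  mu.-integrable setT (EFin \o h) ->
  \int[mu]_(x in A) (h x)%:E <= \int[mu]_x (`|h x|)%:E.
Proof.
move=> mA ih; have mh := measurable_int _ ih.
apply: (le_trans (lee_abs _)); apply: (le_trans (le_abse_integral _ _ _)) => //.
  exact: measurable_funS mh.
apply: ge0_subset_integral => //; apply/measurable_EFinP.
by apply: measurableT_comp => //; exact/measurable_EFinP.
Qed.

Lemma ae_le_integral (A : set T) (f g : T -> R) : measurable A ->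
  mu.-integrable A (EFin \o f) -> mu.-integrable A (EFin \o g) ->
  {ae mu, forall x, f x <= g x}%R ->
  \int[mu]_(x in A) (f x)%:E <= \int[mu]_(x in A) (g x)%:E.
Proof.
move=> mA intf intg fg; have mgf : measurable_fun A (fun x => g x - f x)%R.
  apply: measurable_funB; apply/measurable_EFinP.
  - exact: measurable_int intg.
  - exact: measurable_int intf.
rewrite -subre_ge0; last by have := integrable_fin_num mA intg.
rewrite -integralB_EFin // (ae_eq_integral (fun x => (Num.max (g x - f x) 0)%:E)) //.
- by apply: integral_ge0 => x _; rewrite lee_fin le_max lexx orbT.
- exact: measurableT_comp.
- by apply: measurableT_comp => //; exact: measurable_maxr.
- by apply: filterS fg => x fgx _; rewrite max_l // subr_ge0.
Qed.

Lemma integral_max0 (f : T -> R) :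
  \int[mu]_x (Num.max (f x) 0)%:E = \int[mu]_(x in [set x | 0 < f x]%R) (f x)%:E.
Proof.
rewrite [RHS]integral_mkcond; apply: eq_integral => x _ /=.
rewrite /patch; case: ifPn => [/set_mem/ltW f0|/negP fx0]; first by rewrite max_l.
by rewrite max_r // leNgt; apply/negP => f0; apply: fx0; rewrite inE.
Qed.

End integral_bounds.

Section positive_increment.
Context d (T : measurableType d) (R : realType) (P : probability T R).
Local Open Scope ereal_scope.

Lemma supermartingale_integral_le (G : set (set T)) (S0 S1 Z : T -> R) A :
  P.-integrable setT (EFin \o S0) -> cond_exp_version P G S1 Z ->
  {ae P, forall x, Z x <= S0 x}%R -> G A -> measurable A ->
  \int[P]_(x in A) (S1 x)%:E <= \int[P]_(x in A) (S0 x)%:E.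
Proof.
move=> iS0 [_ [iZ hZ]] ZS0 GA mA; rewrite -hZ //.
have intA h : P.-integrable setT (EFin \o h) -> P.-integrable A (EFin \o h).
  exact: integrableS.
by apply: ae_le_integral => //; exact: intA.
Qed.

(* The one-step estimate: X, X' play E_{m,n}, E_{m,n+1} and S, S' play S_n, S_{n+1}. *)
Lemma integral_pos_cond_exp_sub_le (G : set (set T)) (X X' S S' Y : T -> R) :
  sub_sigma G -> G_measurable G X ->
  P.-integrable setT (EFin \o X) -> P.-integrable setT (EFin \o X') ->
  P.-integrable setT (EFin \o S) -> P.-integrable setT (EFin \o S') ->
  cond_exp_version P G X' Y ->
  (forall A, G A -> \int[P]_(x in A) (S' x)%:E <= \int[P]_(x in A) (S x)%:E) ->
  \int[P]_x (Num.max (Y x - X x) 0)%:E <=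
    \int[P]_x (`|X' x - S' x|)%:E + \int[P]_x (`|X x - S x|)%:E.
Proof.
move=> sG GX iX iX' iS iS' [GY [iY hY]] SS'.
set A := [set x | 0 < Y x - X x]%R.
have GA : G A.
  have mYX : measurable_fun (setT : set (g_sigma_algebraType G))
      (fun x => Y x - X x)%R.
    by apply: measurable_funB; exact/(G_measurableP sG).
  have := mYX measurableT _ (measurable_itv `]0%R, +oo[).
  rewrite setTI measurable_sub_sigmaE //; congr G.
  by apply/seteqP; split => x /=; rewrite in_itv /= andbT.
have mA : measurable A := sG.2 _ GA.
have intA h : P.-integrable setT (EFin \o h) -> P.-integrable A (EFin \o h).
  exact: integrableS.
have integralA_B h1 h2 : P.-integrable setT (EFin \o h1) ->
    P.-integrable setT (EFin \o h2) ->
    \int[P]_(x in A) (h1 x - h2 x)%:E =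
    \int[P]_(x in A) (h1 x)%:E - \int[P]_(x in A) (h2 x)%:E.
  by move=> i1 i2; rewrite -integralB_EFin //; exact: intA.
have intB h1 h2 : P.-integrable setT (EFin \o h1) ->
    P.-integrable setT (EFin \o h2) ->
    P.-integrable setT (EFin \o (fun x => h1 x - h2 x)%R).
  by move=> i1 i2; exact: (integrableB measurableT i1 i2).
have X'S' := integral_le_integral_norm mA (intB _ _ iX' iS').
have SX := integral_le_integral_norm mA (intB _ _ iS iX).
under [X in _ <= _ + X]eq_integral do rewrite distrC.
rewrite integral_max0 -/A integralA_B // hY //.
rewrite integralA_B // in X'S'; rewrite integralA_B // in SX.
have finS' : \int[P]_(x in A) (S' x)%:E \is a fin_num.
  by have := integrable_fin_num mA (intA _ iS').
have -> : \int[P]_(x in A) (X' x)%:E - \int[P]_(x in A) (X x)%:E =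
    (\int[P]_(x in A) (X' x)%:E - \int[P]_(x in A) (S' x)%:E) +
    (\int[P]_(x in A) (S' x)%:E - \int[P]_(x in A) (X x)%:E).
  by rewrite addeA subeK.
by apply: leeD => //; apply: le_trans _ SX; apply: leeB => //; exact: SS'.
Qed.

End positive_increment.

Lemma sub_sigma_F_inf d (T : measurableType d) (F : nat -> nat -> set (set T)) n :
  filtration_array F -> sub_sigma (F_inf F n).
Proof.
move=> [sF _]; split; first exact: smallest_sigma_algebra.
apply: smallest_sub; first exact: sigma_algebra_measurable.
by move=> A [m _ FA]; exact: (sF m n).2.
Qed.

Lemma F_sub_F_inf d (T : measurableType d) (F : nat -> nat -> set (set T)) m n :
  F m n `<=` F_inf F n.
Proof. by move=> A FA; apply: sub_gen_smallest; exists m. Qed.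

Lemma exp_delta_pos_le d (T : measurableType d) (R : realType)
    (Pset : set (probability T R)) (F : nat -> nat -> set (set T))
    (E : nat -> nat -> T -> R) (S : nat -> T -> R) P m n :
  filtration_array F -> adapted_array F E -> supermartingale Pset (F_inf F) S ->
  Pset P -> (forall k, P.-integrable setT (EFin \o E m k)) ->
  (exp_delta_pos P F E m n <=
    \int[P]_x (`|E m n.+1 x - S n.+1 x|)%:E + \int[P]_x (`|E m n x - S n x|)%:E)%E.
Proof.
move=> hF adE [_ [iS superS]] PP iE.
rewrite /exp_delta_pos asboolT //; apply: ge_ereal_sup => _ [Y hY <-].
have [Z hZ] := cond_exp_version_exists (sub_sigma_F_inf n hF) (iS P PP n.+1).
apply: integral_pos_cond_exp_sub_le (hF.1 m n) (adE m n) (iE n) (iE n.+1)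
  (iS P PP n) (iS P PP n.+1) hY _.
move=> A /[dup] /(hF.1 m n).2 mA /F_sub_F_inf FA.
exact: supermartingale_integral_le (iS P PP n) hZ (superS P PP n Z hZ) FA mA.
Qed.

Theorem mainTheorem6 (d : measure_display) (T : measurableType d)
    (R : realType) (Pset : set (probability T R))
    (F : nat -> nat -> set (set T)) (E : nat -> nat -> T -> R) :
  filtration_array F ->
  adapted_array F E ->
  (forall m n x, 0 <= E m n x) ->
  asymptotic_supermartingale Pset F E ->
  ASP Pset F E.
Proof.
move=> hF adE _ [S [_ [superS [iES cvS]]]] n.
set dist := fun k m => ereal_sup ([set 0%E] `|`
  [set (\int[P]_x (`|E m k x - S k x|)%:E)%E | P in Pset]).
have dist0 k m : (0 <= dist k m)%E by apply: ereal_sup_ubound; left.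
apply: (@squeeze_cvge _ _ _ _ (fun=> 0%E) _ (fun m => dist n.+1 m + dist n m)%E).
- apply: nearW => m; apply/andP; split; first by apply: ereal_sup_ubound; left.
  apply: ge_ereal_sup => _ [->|[P PP <-]]; first exact: adde_ge0.
  have iEm k : P.-integrable setT (EFin \o E m k) := (iES P PP m k).1.
  apply: le_trans (exp_delta_pos_le n hF adE superS PP iEm) _.
  by apply: leeD; apply: ereal_sup_ubound; right; exists P.
- exact: cvg_cst.
- by rewrite -[X in _ --> X]adde0; apply: cvgeD => //; exact: cvS.
Qed.
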